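(* Let $G=(V,E)$ be a connected undirected graph with labeled nodes $1,\dots,n_l$ ($1\le n_l<n$) and edge costs $d_e>0$. For every $\lambda\ge0$ and every unlabeled node $p$, the flow-based prediction weights satisfy $w_i(p)\ge0$ for all $i=1,\dots,n_l$ and $\sum_{i=1}^{n_l}w_i(p)=1$. Consequently the prediction $f(p)=\sum_i w_i(p)f(i)$ lies in $[\min_i f(i),\max_i f(i)]$ (maximum principle).
   Context: Orient each edge arbitrarily; let $A$ be the $n\times m$ signed incidence matrix ($A_{ie}=+1$, $A_{je}=-1$ for $e$ oriented from $i$ to $j$), $A_l$ its rows $1,\dots,n_l$ and $A_u$ its remaining rows. For unlabeled $p$, $\vec b_p\in\mathbb R^{n-n_l}$ is zero except $-1$ at the entry of $p$. For $\lambda\ge0$, $\vec x$ is the unique minimizer of $\frac12\sum_{e=1}^m d_e(x_e^2+\lambda|x_e|)$ subject to $A_u\vec x=\vec b_p$, and $\vec w(p)=A_l\vec x$. *)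

From HB Require Import structures.
From mathcomp Require Import all_boot all_order all_algebra.
Set Implicit Arguments. Unset Strict Implicit. Unset Printing Implicit Defensive.
Import Order.TTheory GRing.Theory Num.Theory.
Local Open Scope ring_scope.

(* A graph on nodes 'I_n with m edges; edge e is oriented (arbitrarily)
   from [src e] to [dst e]. *)

Definition adj (n m : nat) (src dst : 'I_m -> 'I_n) : rel 'I_n :=
  fun i j => [exists e : 'I_m,
    ((src e == i) && (dst e == j)) || ((src e == j) && (dst e == i))].

Definition connected_graph (n m : nat) (src dst : 'I_m -> 'I_n) : Prop :=
  forall i j : 'I_n, connect (adj src dst) i j.

Definition incidence (R : ringType) (n m : nat) (src dst : 'I_m -> 'I_n)
  : 'M[R]_(n, m) :=
  \matrix_(i < n, e < m) ((i == src e)%:R - (i == dst e)%:R).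

Definition flow_obj (R : realFieldType) (m : nat) (d : 'I_m -> R) (lam : R)
  (x : 'cV[R]_m) : R :=
  2^-1 * \sum_(e < m) d e * (x e 0 ^+ 2 + lam * `|x e 0|).

(* feasibility: A_u x = b_p, where rows of A_u are the unlabeled nodes
   (indices >= nl) and b_p is -1 at p, 0 elsewhere *)
Definition feasible (R : realFieldType) (n m nl : nat) (src dst : 'I_m -> 'I_n)
  (p : 'I_n) (x : 'cV[R]_m) : Prop :=
  forall i : 'I_n, (nl <= i)%N ->
    (incidence R src dst *m x) i 0 = if i == p then -1 else 0.

Definition is_flow_minimizer (R : realFieldType) (n m nl : nat)
  (src dst : 'I_m -> 'I_n) (d : 'I_m -> R) (lam : R) (p : 'I_n)
  (x : 'cV[R]_m) : Prop :=
  feasible nl src dst p x /\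
  forall y : 'cV[R]_m, feasible nl src dst p y ->
    flow_obj d lam x <= flow_obj d lam y.

(* prediction weights w(p) = A_l x : entry i (for labeled i < nl) *)
Definition weight (R : ringType) (n m : nat) (src dst : 'I_m -> 'I_n)
  (x : 'cV[R]_m) (i : 'I_n) : R :=
  (incidence R src dst *m x) i 0.

From HB Require Import structures.
From mathcomp Require Import all_boot all_order all_algebra.
From mathcomp Require Import lra.
Set Implicit Arguments. Unset Strict Implicit. Unset Printing Implicit Defensive.
Import Order.TTheory GRing.Theory Num.Theory.
Local Open Scope ring_scope.

(* The weight w_i = (A x)_i is the net outflow of the optimal flow x at node i.
   The total net outflow of any flow is zero and x absorbs one unit at the
   unlabeled node p only, so the labeled outflows sum to 1.  If w_v < 0 for a
   labeled v, the set of nodes from which x carries flow to v receives no flow,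
   so its net outflow is nonnegative and it contains a source u, necessarily
   labeled.  Subtracting a small multiple of the unit u-to-v path flow running
   along x changes only labeled rows of A x and strictly lowers the objective,
   contradicting optimality.  Nonnegative weights summing to 1 then give the
   maximum principle. *)

Lemma sumr_indicator (R : pzSemiRingType) (I : finType) (P : pred I) (a : I) :
  \sum_(i | P i) ((i == a)%:R : R) = (P a)%:R.
Proof.
rewrite big_mkcond (bigD1 a) //= eqxx big1 ?addr0; first by case: (P a).
by move=> i /negbTE ->; rewrite if_same.
Qed.

Section Incidence.
Variables (R : ringType) (n m : nat) (src dst : 'I_m -> 'I_n).
Local Notation A := (incidence R src dst).

Lemma sum_incidence_mulmx (P : pred 'I_n) (y : 'cV[R]_m) :
  \sum_(i | P i) (A *m y) i 0 =
  \sum_(e < m) ((P (src e))%:R - (P (dst e))%:R) * y e 0.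
Proof.
under eq_bigr do rewrite mxE.
rewrite exchange_big /=; apply: eq_bigr => e _.
rewrite -mulr_suml; congr (_ * _).
under eq_bigr do rewrite mxE.
by rewrite sumrB !sumr_indicator.
Qed.

Lemma sum_all_incidence_mulmx (y : 'cV[R]_m) : \sum_i (A *m y) i 0 = 0.
Proof.
by rewrite sum_incidence_mulmx big1 // => e _; rewrite subrr mul0r.
Qed.

Lemma incidence_mulmx_delta (s : R) (e : 'I_m) (i : 'I_n) :
  (A *m (s *: delta_mx e 0 : 'cV_m)) i 0 = A i e * s.
Proof.
rewrite mxE (bigD1 e) //= big1 ?addr0 => [|k /negbTE k_e]; rewrite !mxE ?eqxx.
  by rewrite mulr1.
by rewrite k_e mulr0 mulr0.
Qed.

End Incidence.

Section ConformalFlow.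
Variables (R : realDomainType) (n m : nat) (src dst : 'I_m -> 'I_n).
Variable x : 'cV[R]_m.
Local Notation A := (incidence R src dst).

Definition flow_step : rel 'I_n := fun u v => [exists e : 'I_m,
  ((src e == u) && (dst e == v) && (0 < x e 0)) ||
  ((src e == v) && (dst e == u) && (x e 0 < 0))].

Definition conformal (z : 'cV[R]_m) : Prop :=
  forall e, (x e 0 = 0 -> z e 0 = 0) /\ 0 <= x e 0 * z e 0.

Lemma conformal0 : conformal 0.
Proof. by move=> e; rewrite mxE mulr0. Qed.

Lemma conformalD (z1 z2 : 'cV[R]_m) :
  conformal z1 -> conformal z2 -> conformal (z1 + z2).
Proof.
move=> z1x z2x e; have [z1e0 z1e] := z1x e; have [z2e0 z2e] := z2x e.
by rewrite mxE mulrDr addr_ge0 //; split=> // /[dup] /z1e0 -> /z2e0 ->; rewrite addr0.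
Qed.

Lemma conformal_delta (s : R) (e : 'I_m) :
  0 < s * x e 0 -> conformal (s *: delta_mx e 0).
Proof.
move=> sxe k; rewrite !mxE; have [->|] := eqVneq k e.
  by rewrite mulr1 mulrC (ltW sxe); split=> // xe0; move: sxe; rewrite xe0 mulr0 ltxx.
by rewrite mulr0 mulr0.
Qed.

Lemma flow_step_edge (u v : 'I_n) : flow_step u v ->
  exists e s, 0 < s * x e 0 /\ forall i, A i e * s = (i == u)%:R - (i == v)%:R.
Proof.
case/existsP=> e /orP[/andP[/andP[/eqP se /eqP de] xe]|/andP[/andP[/eqP se /eqP de] xe]].
  by exists e, 1; rewrite mul1r; split=> // i; rewrite mxE mulr1 se de.
exists e, (-1); rewrite mulN1r oppr_gt0; split=> // i.
by rewrite mxE mulrN1 se de opprB.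
Qed.

Lemma connect_flow_step_conformal (u v : 'I_n) : connect flow_step u v ->
  exists2 z, conformal z & forall i, (A *m z) i 0 = (i == u)%:R - (i == v)%:R.
Proof.
move=> /connectP[s]; elim: s u => [|w s IH] u /=.
  by move=> _ ->; exists 0 => [|i]; [exact: conformal0 | rewrite mulmx0 mxE subrr].
case/andP=> /flow_step_edge[e [t [txe Ae]]] /IH /[apply] -[z zx Az].
exists (z + t *: delta_mx e 0) => [|i]; first exact/conformalD/conformal_delta.
by rewrite mulmxDr mxE Az incidence_mulmx_delta Ae addrC subrKA.
Qed.

Lemma flow_step_sink_has_source (v : 'I_n) : (A *m x) v 0 < 0 ->
  exists2 u, connect flow_step u v & 0 < (A *m x) u 0.
Proof.
move=> Axv_lt0; pose S u := connect flow_step u v.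
(* No flow enters the set [S] of nodes draining into [v], so its net outflow is nonnegative. *)
have S_out_ge0 : 0 <= \sum_(u | S u) (A *m x) u 0.
  rewrite sum_incidence_mulmx; apply: sumr_ge0 => e _.
  case Ss: (S (src e)); case Sd: (S (dst e)); rewrite ?subrr ?mul0r //=.
    rewrite subr0 mul1r leNgt; apply: contraFN Sd => xe_lt0.
    by apply: connect_trans Ss; apply: connect1; apply/existsP; exists e; rewrite !eqxx xe_lt0 orbT.
  rewrite sub0r mulN1r oppr_ge0 leNgt; apply: contraFN Ss => xe_gt0.
  by apply: connect_trans Sd; apply: connect1; apply/existsP; exists e; rewrite !eqxx xe_gt0.
apply/exists_inP; apply: contraTT S_out_ge0 => /exists_inPn S_le0.
rewrite -ltNge (bigD1 v) ?[S v]connect0 //= -[X in _ < X]addr0 ltr_leD //.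
by apply: sumr_le0 => u /andP[Su _]; rewrite leNgt S_le0.
Qed.
End ConformalFlow.

Lemma sqr_norm_sub_aligned (R : realDomainType) (a b lam : R) :
  0 <= a * b -> `|b| <= `|a| -> 0 <= lam ->
  (a - b) ^+ 2 + lam * `|a - b| + b ^+ 2 <= a ^+ 2 + lam * `|a|.
Proof.
move=> ab_ge0 ba lam_ge0.
have [a0|a0] := leP 0 a; have [b0|b0] := leP 0 b; have [c0|c0] := leP 0 (a - b);
  rewrite ?(ger0_norm a0) ?(ltr0_norm a0) ?(ger0_norm b0) ?(ltr0_norm b0)
    ?(ger0_norm c0) ?(ltr0_norm c0) in ba *; nra.
Qed.

Lemma exists_scale_le_norm (R : realFieldType) (m : nat) (x z : 'cV[R]_m) :
  (forall e, x e 0 = 0 -> z e 0 = 0) ->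
  exists2 eps : R, 0 < eps & forall e, `|eps * z e 0| <= `|x e 0|.
Proof.
move=> supp_zx; pose M := \sum_(e < m) `|z e 0| / `|x e 0|.
have M_ge0 : 0 <= M by apply: sumr_ge0 => e _; rewrite divr_ge0.
exists (1 + M)^-1 => [|e]; first by rewrite invr_gt0; lra.
have [xe0|xe_neq0] := eqVneq (x e 0) 0; first by rewrite supp_zx // mulr0 normr0.
have xe_gt0 : 0 < `|x e 0| by rewrite normr_gt0.
have ratio_le : `|z e 0| / `|x e 0| <= M.
  by rewrite /M (bigD1 e) //= lerDl; apply: sumr_ge0 => k _; rewrite divr_ge0.
rewrite normrM ger0_norm ?invr_ge0 ?addr_ge0 // mulrC ler_pdivrMr; last lra.
by rewrite -ler_pdivrMl // mulrC; lra.
Qed.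

Lemma flow_obj_conformal_descent (R : realFieldType) (m : nat) (d : 'I_m -> R)
    (lam : R) (x z : 'cV[R]_m) :
  (forall e, 0 < d e) -> 0 <= lam -> conformal x z -> z != 0 ->
  exists2 eps : R, 0 < eps & flow_obj d lam (x - eps *: z) < flow_obj d lam x.
Proof.
move=> d_gt0 lam_ge0 zx nz_z.
have [e0 ze0] : exists e0, z e0 0 != 0.
  apply/existsP; move: nz_z; apply: contraNT; rewrite negb_exists => /forallP z0.
  by apply/eqP/matrixP => e j; rewrite (ord1 j) mxE; apply/eqP/negbNE/z0.
have [eps eps_gt0 eps_le] := exists_scale_le_norm (fun e => (zx e).1).
exists eps => //; rewrite /flow_obj ltr_pM2l ?invr_gt0 ?ltr0n //.
pose b e := eps * z e 0.
have aligned e : 0 <= x e 0 * b e by rewrite mulrCA mulr_ge0 ?(ltW eps_gt0) ?(zx e).2.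
have term_le e : d e * ((x - eps *: z) e 0 ^+ 2 + lam * `|(x - eps *: z) e 0|)
    + d e * b e ^+ 2 <= d e * (x e 0 ^+ 2 + lam * `|x e 0|).
  by rewrite !mxE -mulrDr ler_pM2l ?sqr_norm_sub_aligned.
have gain_gt0 : 0 < \sum_e d e * b e ^+ 2.
  have be0 : 0 < d e0 * b e0 ^+ 2.
    by rewrite mulr_gt0 // exprn_even_gt0 //= mulf_neq0 // gt_eqF.
  rewrite (bigD1 e0) //= ltr_pwDl //.
  by apply: sumr_ge0 => e _; rewrite mulr_ge0 ?sqr_ge0 ?ltW.
apply: lt_le_trans (ler_sum _ (fun e _ => term_le e)); rewrite big_split /=.
by rewrite ltrDl.
Qed.

Lemma convex_comb_ge_min (R : realDomainType) (I : finType) (P : pred I)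
    (w f : I -> R) (i0 : I) :
  P i0 -> (forall i, P i -> 0 <= w i) -> \sum_(i | P i) w i = 1 ->
  exists2 i, P i & f i <= \sum_(j | P j) w j * f j.
Proof.
move=> Pi0 w_ge0 w_sum1.
case: (arg_minP f Pi0) => i Pi f_min; exists i => //.
rewrite -[f i]mul1r -w_sum1 mulr_suml; apply: ler_sum => j Pj.
by rewrite ler_wpM2l ?w_ge0 ?f_min.
Qed.

Lemma convex_comb_le_max (R : realDomainType) (I : finType) (P : pred I)
    (w f : I -> R) (i0 : I) :
  P i0 -> (forall i, P i -> 0 <= w i) -> \sum_(i | P i) w i = 1 ->
  exists2 i, P i & \sum_(j | P j) w j * f j <= f i.
Proof.
move=> Pi0 w_ge0 w_sum1.
have [i Pi] := convex_comb_ge_min (fun j => - f j) Pi0 w_ge0 w_sum1.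
by exists i; rewrite // -lerN2 -sumrN; under eq_bigr do rewrite -mulrN.
Qed.

Section Feasible.
Variables (R : realFieldType) (n m nl : nat) (src dst : 'I_m -> 'I_n) (p : 'I_n).
Hypothesis p_unlabeled : (nl <= p)%N.
Local Notation A := (incidence R src dst).

Lemma feasible_weight_le0 (x : 'cV[R]_m) (i : 'I_n) :
  feasible nl src dst p x -> (nl <= i)%N -> weight src dst x i <= 0.
Proof. by move=> fx /fx; rewrite /weight => ->; case: (i == p); rewrite ?lerN10. Qed.

Lemma feasible_sum_weight (x : 'cV[R]_m) :
  feasible nl src dst p x -> \sum_(i < n | (i < nl)%N) weight src dst x i = 1.
Proof.
move=> fx; have unlab : \sum_(i < n | ~~ (i < nl)%N) (A *m x) i 0 = -1.
  rewrite (eq_bigr (fun i => - ((i == p)%:R : R))) => [|i].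
    by rewrite sumrN sumr_indicator -leqNgt p_unlabeled.
  by rewrite -leqNgt => /fx ->; case: (i == p); rewrite ?oppr0.
have := sum_all_incidence_mulmx src dst x.
by rewrite (bigID (fun i : 'I_n => (i < nl)%N)) /= unlab => /eqP; rewrite subr_eq0 => /eqP.
Qed.

Lemma feasible_sub_labeled (x z : 'cV[R]_m) (eps : R) :
  feasible nl src dst p x -> (forall i : 'I_n, (nl <= i)%N -> (A *m z) i 0 = 0) ->
  feasible nl src dst p (x - eps *: z).
Proof.
move=> fx Az0 i Ni; rewrite mulmxBr -scalemxAr.
have -> : (A *m x - eps *: (A *m z)) i 0 = (A *m x) i 0 - eps * (A *m z) i 0.
  by rewrite !mxE.
by rewrite fx // Az0 // mulr0 subr0.
Qed.

Lemma flow_minimizer_weight_ge0 (d : 'I_m -> R) (lam : R) (x : 'cV[R]_m) (v : 'I_n) :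
  (forall e, 0 < d e) -> 0 <= lam -> is_flow_minimizer nl src dst d lam p x ->
  (v < nl)%N -> 0 <= weight src dst x v.
Proof.
move=> d_gt0 lam_ge0 [fx x_min] v_lab; rewrite leNgt; apply/negP => Axv_lt0.
have [u /connect_flow_step_conformal[z zx Az] Axu_gt0] := flow_step_sink_has_source Axv_lt0.
have u_lab : (u < nl)%N.
  by rewrite ltnNge; apply: contraTN Axu_gt0 => /(feasible_weight_le0 fx); rewrite -leNgt.
have u_neq_v : u != v by apply: contraTneq Axu_gt0 => ->; rewrite -leNgt ltW.
have nz_z : z != 0.
  apply/eqP => z0; have /eqP := Az u.
  by rewrite z0 mulmx0 mxE eqxx (negbTE u_neq_v) subr0 eq_sym oner_eq0.
have [eps eps_gt0] := flow_obj_conformal_descent d_gt0 lam_ge0 zx nz_z.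
apply/negP; rewrite -leNgt; apply: x_min; apply: feasible_sub_labeled => // i Ni.
have i_neq (w : 'I_n) : (w < nl)%N -> (i == w) = false.
  by move=> w_lab; apply/negbTE; apply: contraTneq Ni => ->; rewrite -ltnNge.
by rewrite Az !i_neq ?subrr.
Qed.
End Feasible.

Theorem proposition4 (R : realFieldType) (n m nl : nat)
  (src dst : 'I_m -> 'I_n) (d : 'I_m -> R) (lam : R) (p : 'I_n)
  (x : 'cV[R]_m) :
  (1 <= nl)%N -> (nl < n)%N ->
  (forall e : 'I_m, src e != dst e) ->
  connected_graph src dst ->
  (forall e : 'I_m, 0 < d e) ->
  0 <= lam ->
  (nl <= p)%N ->
  is_flow_minimizer nl src dst d lam p x ->
  [/\ (forall i : 'I_n, (i < nl)%N -> 0 <= weight src dst x i),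
      \sum_(i < n | (i < nl)%N) weight src dst x i = 1
    & forall f : 'I_n -> R,
        let fp := \sum_(i < n | (i < nl)%N) weight src dst x i * f i in
        (exists2 i : 'I_n, (i < nl)%N & f i <= fp) /\
        (exists2 j : 'I_n, (j < nl)%N & fp <= f j)].
Proof.
(* Connectivity and loop-freeness only guarantee that a minimizer exists,
   which is assumed here. *)
move=> nl_gt0 nl_lt_n _ _ d_gt0 lam_ge0 p_unlab x_min.
have w_ge0 := flow_minimizer_weight_ge0 d_gt0 lam_ge0 x_min.
have w_sum1 := feasible_sum_weight p_unlab x_min.1.
have i0_lab : (Ordinal (ltn_trans nl_gt0 nl_lt_n) < nl)%N := nl_gt0.
split=> // f; split.
  exact: convex_comb_ge_min i0_lab w_ge0 w_sum1.
exact: convex_comb_le_max i0_lab w_ge0 w_sum1.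
Qed.
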